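(* Let $n$ be a positive integer, let $\mathbf{A}$ be an infinite $n$-generated subdirectly irreducible bi-Heyting algebra validating $LFC$, let $\mathfrak{X}=\mathbf{A}_*$, and let $m$ be a minimal element of $\mathfrak{X}$ with $X=\{x:m<x\}\uplus min(\mathfrak{X})$ and such that every minimal $y\ne m$ has a unique immediate successor lying strictly above $m$. If $m<x$ and $x$ is not an up limit, then $x$ has at most $2$ immediate predecessors.
   Context: Bi-Heyting algebras are bounded distributive lattices with residuated $\to$ and $\leftarrow$. $\mathbf{A}_*$ is the bi-Esakia dual: prime filters ordered by inclusion with the Priestley topology. For SI $\mathbf{A}$ validating $\mathsf{bi\text{-}LC}$ (bi-intuitionistic logic plus $(p\to q)\vee(q\to p)$), $\mathbf{A}_*$ is a bi-Esakia co-tree: it has a top and principal upsets are chains. $LFC=\mathsf{bi\text{-}LC}+\beta(\mathfrak{F}_0)+\mathcal{J}(\mathfrak{F}_1)+\mathcal{J}(\mathfrak{F}_2)+\mathcal{J}(\mathfrak{F}_3)$. For a finite co-tree $\mathfrak{Y}$: - $\mathfrak{X}\not\models\beta(\mathfrak{Y})$ iff $\mathfrak{Y}$ order-embeds into $\mathfrak{X}$; - $\mathfrak{X}\not\models\mathcal{J}(\mathfrak{Y})$ iff there is a continuous surjective bi-p-morphism onto $\mathfrak{Y}$. The co-trees are: - $\mathfrak{F}_0$: $d<b<a$, $e<c<a$; - $\mathfrak{F}_1$: the chain $c<b<a$; - $\mathfrak{F}_2$: the chain $d<c<b<a$ plus $a'<a$, with $a'$ incomparable to $b,c,d$; - $\mathfrak{F}_3$: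 a top over three incomparable minimal points. A point $x$ with $m<x$ is an up limit if it has no immediate predecessor $z$ with $m\le z$. *)

From HB Require Import structures.
From mathcomp Require Import all_boot all_order.
Set Implicit Arguments. Unset Strict Implicit. Unset Printing Implicit Defensive.
Import Order.TTheory.
Local Open Scope order_scope.

Record biHeyting (d : Order.disp_t) (L : tbDistrLatticeType d) := BiHeyting {
  bimp : L -> L -> L;
  bcoimp : L -> L -> L;
  bimpP : forall a b c : L, (c <= bimp a b) = (c `&` a <= b);
  bcoimpP : forall a b c : L, (bcoimp a b <= c) = (a <= b `|` c)
}.

Section BiHeytingDefs.
Variables (d : Order.disp_t) (L : tbDistrLatticeType d) (B : biHeyting L).

Inductive bterm (n : nat) : Type :=
| TVar of 'I_n
| TTop | TBot
| TMeet of bterm n & bterm n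
| TJoin of bterm n & bterm n
| TImp of bterm n & bterm n
| TCoimp of bterm n & bterm n.

Fixpoint beval (n : nat) (g : 'I_n -> L) (t : bterm n) : L :=
  match t with
  | TVar i => g i
  | TTop => \top
  | TBot => \bot
  | TMeet t1 t2 => beval g t1 `&` beval g t2
  | TJoin t1 t2 => beval g t1 `|` beval g t2
  | TImp t1 t2 => bimp B (beval g t1) (beval g t2)
  | TCoimp t1 t2 => bcoimp B (beval g t1) (beval g t2)
  end.

Definition n_generated (n : nat) : Prop :=
  exists g : 'I_n -> L, forall a : L, exists t : bterm n, beval g t = a.

Definition infinite_alg : Prop := forall s : seq L, exists x : L, x \notin s.

Definition congruence (th : L -> L -> Prop) : Prop :=
  [/\ (forall a, th a a),
      (forall a b, th a b -> th b a),
      (forall a b c, th a b -> th b c -> th a c),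
      (forall a b a' b', th a a' -> th b b' -> th (a `&` b) (a' `&` b')) &
      (forall a b a' b', th a a' -> th b b' -> th (a `|` b) (a' `|` b'))] /\
  (forall a b a' b', th a a' -> th b b' -> th (bimp B a b) (bimp B a' b')) /\
  (forall a b a' b', th a a' -> th b b' -> th (bcoimp B a b) (bcoimp B a' b')).

Definition nontrivial_rel (th : L -> L -> Prop) : Prop :=
  exists a b, th a b /\ a <> b.

Definition subdirectly_irreducible : Prop :=
  exists th, congruence th /\ nontrivial_rel th /\
    forall ps, congruence ps -> nontrivial_rel ps ->
      forall a b, th a b -> ps a b.

(** * The dual space A_*: prime filters, ordered by inclusion. *)
Definition prime_filter (F : L -> Prop) : Prop :=
  [/\ F \top, ~ F \bot,
      (forall a b, F a -> a <= b -> F b),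
      (forall a b, F a -> F b -> F (a `&` b)) &
      (forall a b, F (a `|` b) -> F a \/ F b)].

Definition pf_le (x y : L -> Prop) : Prop := forall a, x a -> y a.
Definition pf_eq (x y : L -> Prop) : Prop := pf_le x y /\ pf_le y x.
Definition pf_lt (x y : L -> Prop) : Prop := pf_le x y /\ ~ pf_le y x.

(** Open sets of the Priestley topology: basic opens are
    phi(a) \ phi(b) = {x | a \in x, b \notin x}. *)
Definition priestley_open (U : (L -> Prop) -> Prop) : Prop :=
  forall x, prime_filter x -> U x ->
    exists a b, x a /\ ~ x b /\
      forall y, prime_filter y -> y a -> ~ y b -> U y.

Definition pf_minimal (x : L -> Prop) : Prop :=
  prime_filter x /\ forall y, prime_filter y -> pf_le y x -> pf_le x y.

Definition imm_pred (z x : L -> Prop) : Prop :=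
  prime_filter z /\ prime_filter x /\ pf_lt z x /\
  ~ exists w, prime_filter w /\ pf_lt z w /\ pf_lt w x.

Definition up_limit (m x : L -> Prop) : Prop :=
  ~ exists z, imm_pred z x /\ pf_le m z.

Record fposet := FPoset { fp_card : nat; fp_le : rel 'I_fp_card }.

(** F0: a=0, b=1, c=2, d=3, e=4 with d<b<a, e<c<a. *)
Definition F0 : fposet := @FPoset 5 (fun i j =>
  [|| i == j, val j == 0, (val i == 3) && (val j == 1) |
      (val i == 4) && (val j == 2)]%N).
(** F1: chain c<b<a with a=0, b=1, c=2. *)
Definition F1 : fposet := @FPoset 3 (fun i j => (val j <= val i)%N).
(** F2: chain d<c<b<a (a=0,b=1,c=2,d=3) plus a'=4 < a. *)
Definition F2 : fposet := @FPoset 5 (fun i j =>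
  [|| i == j, val j == 0 | [&& val i < 4, val j < 4 & val j <= val i]]%N).
(** F3: top 0 over three incomparable minimal points 1,2,3. *)
Definition F3 : fposet := @FPoset 4 (fun i j => (i == j) || (val j == 0)%N).

Definition order_embeds (Y : fposet) : Prop :=
  exists f : 'I_(fp_card Y) -> (L -> Prop),
    (forall i, prime_filter (f i)) /\
    forall i j, @fp_le Y i j <-> pf_le (f i) (f j).

(** There is a continuous surjective bi-p-morphism from A_* onto Y
    (Y carries the discrete topology). *)
Definition bi_pmorphic_onto (Y : fposet) : Prop :=
  exists f : (L -> Prop) -> 'I_(fp_card Y),
    [/\ (forall x y, prime_filter x -> prime_filter y -> pf_le x y ->
           @fp_le Y (f x) (f y)),
        (forall x j, prime_filter x -> @fp_le Y (f x) j ->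
           exists y, prime_filter y /\ pf_le x y /\ f y = j),
        (forall x j, prime_filter x -> @fp_le Y j (f x) ->
           exists y, prime_filter y /\ pf_le y x /\ f y = j),
        (forall j, exists x, prime_filter x /\ f x = j) &
        (forall j, priestley_open (fun x => f x = j))].

Definition valid_biLC : Prop :=
  forall a b : L, bimp B a b `|` bimp B b a = \top.

(** A validates LFC = bi-LC + beta(F0) + J(F1) + J(F2) + J(F3), using
    X |/= beta(Y) iff Y order-embeds in X, and
    X |/= J(Y) iff there is a continuous surjective bi-p-morphism onto Y. *)
Definition validates_LFC : Prop :=
  [/\ valid_biLC, ~ order_embeds F0, ~ bi_pmorphic_onto F1,
      ~ bi_pmorphic_onto F2 & ~ bi_pmorphic_onto F3].

End BiHeytingDefs.

(* By bi-LC every principal upset of the dual space is a chain, so a point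
   above [m] that is not above [x] lies below the immediate predecessor [z] of
   [x] with [m <= z]; all other points are minimal.  For [e] in [x] but not in
   [z], the upset of [x] is therefore the clopen [phi(e /\ (top <- e))], since
   [top <- e] belongs to a prime filter exactly when some prime filter below it
   omits [e].  If [x] had two further immediate predecessors [y1] and [y2],
   pick [p] in [y1 \ y2], [q] in [y1 \ z] and [c] in [y2 \ z]: sending the
   upset of [x] to the top of F3 and splitting the rest by [p /\ q] and [c]
   gives a continuous bi-p-morphism onto F3 that maps [y1], [y2] and [z] to
   its three minimal points, contradicting J(F3). *)
From mathcomp Require Import all_boot all_order.
From mathcomp Require Import boolp classical_sets.
Set Implicit Arguments. Unset Strict Implicit. Unset Printing Implicit Defensive.
Import Order.TTheory.
Local Open Scope order_scope.

Section PrimeFilter.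
Variables (d : Order.disp_t) (L : tbDistrLatticeType d) (u : L -> Prop).
Hypothesis pu : prime_filter u.

Lemma pf_top : u \top. Proof. by case: pu. Qed.

Lemma pf_bot : ~ u \bot. Proof. by case: pu. Qed.

Lemma pf_up (a b : L) : u a -> a <= b -> u b.
Proof. by case: pu => _ _ up _ _; apply: up. Qed.

Lemma pf_meetP (a b : L) : u (a `&` b) <-> u a /\ u b.
Proof.
split=> [uab|[ua ub]]; last by case: pu => _ _ _ meet _; apply: meet.
by split; apply: pf_up uab _; rewrite ?leIl ?leIr.
Qed.

Lemma pf_joinP (a b : L) : u (a `|` b) <-> u a \/ u b.
Proof.
split=> [|[ua|ub]]; first by case: pu => _ _ _ _; apply.
- by apply: pf_up ua _; rewrite leUl.
- by apply: pf_up ub _; rewrite leUr.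
Qed.

End PrimeFilter.

Lemma pf_not_le d (L : tbDistrLatticeType d) (u v : L -> Prop) :
  ~ pf_le u v -> exists a, u a /\ ~ v a.
Proof. by move=> /existsNP[a /not_implyP]; exists a. Qed.

Section PrimeFilterTheorem.
Variables (d : Order.disp_t) (L : tbDistrLatticeType d) (I : L -> Prop).
Hypotheses (I_down : forall a b, I b -> a <= b -> I a)
  (I_join : forall a b, I a -> I b -> I (a `|` b))
  (I_bot : I \bot) (I_top : ~ I \top).

Definition filter_avoiding (F : set L) : Prop :=
  [/\ forall a b, F a -> a <= b -> F b,
      forall a b, F a -> F b -> F (a `&` b) &
      forall c, F c -> ~ I c].

Lemma exists_maximal_filter_avoiding :
  exists A, filter_avoiding A /\ forall C, proper A C -> ~ filter_avoiding C.
Proof.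
apply: Zorn_bigcup => F FP Ftot; split.
- move=> a b [X FX Xa] ab; exists X => //.
  by case: (FP X FX) => up _ _; apply: up Xa ab.
- move=> a b [X FX Xa] [Y FY Yb].
  have [XY|YX] := Ftot X Y FX FY.
    by exists Y => //; case: (FP Y FY) => _ meet _; apply: meet (XY _ Xa) Yb.
  by exists X => //; case: (FP X FX) => _ meet _; apply: meet Xa (YX _ Yb).
- by move=> c [X FX Xc]; case: (FP X FX) => _ _; apply.
Qed.

Section MaximalFilter.
Variable A : set L.
Hypotheses (A_avoid : filter_avoiding A)
  (A_max : forall C, proper A C -> ~ filter_avoiding C).

Lemma maximal_avoiding_top : A \top.
Proof.
case: A_avoid => A_up A_meet A_I.
apply: contrapT => nAtop; apply: (A_max (C := fun c => A c \/ c = \top)).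
  by split=> [c Ac|]; [left | move/(_ \top (or_intror erefl))].
split.
- move=> a b [Aa|->] ab; first by left; apply: A_up Aa ab.
  by right; apply/eqP; rewrite eq_le lex1 ab.
- move=> a b [Aa|->] [Ab|->]; rewrite ?meetx1 ?meet1x ?meetxx //.
  + by left; apply: A_meet.
  + by left.
  + by left.
  + by right.
- by move=> c [Ac|->]; [apply: A_I | ].
Qed.

Lemma maximal_avoiding_extend a : ~ A a -> exists2 f, A f & I (f `&` a).
Proof.
case: A_avoid => A_up A_meet A_I nAa.
pose Aa c := exists2 f, A f & f `&` a <= c.
apply: contrapT => nI; apply: (A_max (C := Aa)).
  split=> [c Ac|]; first by exists c; rewrite ?leIl.
  move=> sub; apply/nAa/sub; exists \top; last by rewrite meet1x.
  exact: maximal_avoiding_top.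
split.
- by move=> b c [f Af le] bc; exists f => //; apply: le_trans bc.
- move=> b c [f Af lf] [g Ag lg]; exists (f `&` g); first exact: A_meet.
  rewrite lexI (le_trans _ lf) ?(le_trans _ lg) //.
  + by apply: leI2; rewrite ?leIr.
  + by apply: leI2; rewrite ?leIl.
- by move=> c [f Af le] Ic; apply: nI; exists f => //; apply: I_down Ic le.
Qed.

Lemma maximal_avoiding_prime : prime_filter A.
Proof.
case: A_avoid => A_up A_meet A_I.
split=> //; first exact: maximal_avoiding_top; first by move/A_I.
move=> a b Aab; apply: contrapT => /not_orP[/maximal_avoiding_extend[f Af Ifa]].
move=> /maximal_avoiding_extend[g Ag Igb].
apply: (A_I ((f `&` g) `&` (a `|` b))).
  exact: (A_meet _ _ (A_meet _ _ Af Ag) Aab).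
rewrite meetUr; apply: I_join.
  by apply: I_down Ifa _; apply: leI2; rewrite ?leIl.
by apply: I_down Igb _; apply: leI2; rewrite ?leIr.
Qed.

End MaximalFilter.

Theorem prime_filter_avoiding :
  exists A, prime_filter A /\ forall c, A c -> ~ I c.
Proof.
have [A [A_avoid A_max]] := exists_maximal_filter_avoiding.
by exists A; split; [apply: maximal_avoiding_prime | case: A_avoid].
Qed.

End PrimeFilterTheorem.

Section Coimplication.
Variables (d : Order.disp_t) (L : tbDistrLatticeType d) (B : biHeyting L).

Lemma meet_bimp_le (a b : L) : bimp B a b `&` a <= b.
Proof. by rewrite -(bimpP B). Qed.

Lemma le_join_bcoimp (a b : L) : a <= b `|` bcoimp B a b.
Proof. by rewrite -(bcoimpP B). Qed.

Lemma biLC_pf_le_total (u v w : L -> Prop) : valid_biLC B ->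
  prime_filter u -> prime_filter v -> prime_filter w ->
  pf_le u v -> pf_le u w -> pf_le v w \/ pf_le w v.
Proof.
move=> HLC pu pv pw uv uw; apply: contrapT => /not_orP[/pf_not_le[a [va nwa]]].
move=> /pf_not_le[b [wb nvb]].
have /(pf_joinP pu)[/uv vab|/uw wba] : u (bimp B a b `|` bimp B b a).
  by rewrite HLC; apply: pf_top.
- by apply/nvb/(pf_up pv _ (meet_bimp_le a b))/(pf_meetP pv).
- by apply/nwa/(pf_up pw _ (meet_bimp_le b a))/(pf_meetP pw).
Qed.

Lemma pf_bcoimp_top (u : L -> Prop) (e : L) : prime_filter u ->
  u (bcoimp B \top e) <-> exists v, [/\ prime_filter v, pf_le v u & ~ v e].
Proof.
move=> pu; split=> [ue|[v [pv vu nve]]]; last first.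
  apply: vu; have /(pf_joinP pv)[] // : v (e `|` bcoimp B \top e).
  exact: pf_up (pf_top pv) (le_join_bcoimp _ _).
pose I c := exists w, ~ u w /\ c <= w `|` e.
have [||||v [pv vI]] := @prime_filter_avoiding _ _ I.
- by move=> a b [w [nuw bw]] ab; exists w; split => //; apply: le_trans bw.
- move=> a b [w [nuw aw]] [w' [nuw' bw']]; exists (w `|` w'); split.
    by move/(pf_joinP pu) => [].
  by rewrite leUx (le_trans aw) ?(le_trans bw') // leU2 // ?leUl ?leUr.
- by exists \bot; split; [apply: pf_bot | rewrite le0x].
- move=> [w [nuw le]]; apply/nuw/(pf_up pu ue).
  by rewrite bcoimpP joinC.
exists v; split=> // [c vc|ve].
  by apply: contrapT => nuc; apply: (vI c vc); exists c; rewrite leUl.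
by apply: (vI e ve); exists \bot; split; [apply: pf_bot | rewrite leUr].
Qed.

End Coimplication.

Definition F3_class (P0 P1 P2 : Prop) : 'I_4 :=
  inord (if `[< P0 >] then 0 else if `[< P1 >] then 1
         else if `[< P2 >] then 2 else 3).

Section F3Class.
Variables P0 P1 P2 : Prop.

Lemma F3_classK : F3_class P0 P1 P2 =
  (if `[< P0 >] then 0 else if `[< P1 >] then 1
   else if `[< P2 >] then 2 else 3)%N :> nat.
Proof. by rewrite inordK //; do 3?case: ifP. Qed.

Lemma F3_class0 : P0 -> F3_class P0 P1 P2 = 0%N :> nat.
Proof. by move=> /asboolT p0; rewrite F3_classK p0. Qed.

Lemma F3_class_eq0 : F3_class P0 P1 P2 = 0%N :> nat -> P0.
Proof. by rewrite F3_classK; case: asboolP => // _; do 2?case: ifP. Qed.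

Lemma F3_class1 : ~ P0 -> P1 -> F3_class P0 P1 P2 = 1%N :> nat.
Proof. by move=> /asboolF n0 /asboolT p1; rewrite F3_classK n0 p1. Qed.

Lemma F3_class2 : ~ P0 -> ~ P1 -> P2 -> F3_class P0 P1 P2 = 2%N :> nat.
Proof.
by move=> /asboolF n0 /asboolF n1 /asboolT p2; rewrite F3_classK n0 n1 p2.
Qed.

Lemma F3_class3 : ~ P0 -> ~ P1 -> ~ P2 -> F3_class P0 P1 P2 = 3%N :> nat.
Proof.
by move=> /asboolF n0 /asboolF n1 /asboolF n2; rewrite F3_classK n0 n1 n2.
Qed.

End F3Class.

Section F3Map.
Variables (d : Order.disp_t) (L : tbDistrLatticeType d) (a0 a1 a2 : L).

Definition F3_map (u : L -> Prop) : 'I_4 := F3_class (u a0) (u a1) (u a2).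

Lemma F3_map_open (j : 'I_4) : priestley_open (fun u => F3_map u = j).
Proof.
move=> u pu <-; rewrite /F3_map.
have [u0|nu0] := asboolP (u a0).
  exists a0, \bot; split=> //; split=> [|v _ v0 _]; first exact: pf_bot.
  by apply: ord_inj; rewrite !F3_class0.
have [u1|nu1] := asboolP (u a1).
  exists a1, a0; split=> //; split=> // v _ v1 nv0.
  by apply: ord_inj; rewrite !F3_class1.
have [u2|nu2] := asboolP (u a2).
  exists a2, (a1 `|` a0); split=> //; split=> [/(pf_joinP pu)[] //|].
  move=> v pv v2 /(pf_joinP pv)/not_orP[nv1 nv0].
  by apply: ord_inj; rewrite !F3_class2.
exists \top, (a0 `|` (a1 `|` a2)); split; first exact: pf_top.
split=> [/(pf_joinP pu)[|/(pf_joinP pu)[]] //|].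
move=> v pv _ /(pf_joinP pv)/not_orP[nv0 /(pf_joinP pv)/not_orP[nv1 nv2]].
by apply: ord_inj; rewrite !F3_class3.
Qed.

Variable x : L -> Prop.
Hypotheses (a0_above_x : forall u, prime_filter u -> u a0 -> pf_le x u)
  (below_x : forall j, exists y, [/\ prime_filter y, pf_le y x & F3_map y = j])
  (up_to_a0 : forall u, prime_filter u ->
     exists v, [/\ prime_filter v, pf_le u v & v a0])
  (agree_off_a0 : forall u v, prime_filter u -> prime_filter v ->
     pf_le u v -> ~ v a0 -> (u a1 <-> v a1) /\ (u a2 <-> v a2)).

Lemma bi_pmorphic_onto_F3 : bi_pmorphic_onto L F3.
Proof.
exists F3_map; split.
- move=> u v pu pv uv; have [v0|nv0] := asboolP (v a0).
    by rewrite /= F3_class0 ?orbT.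
  have [e1 e2] := agree_off_a0 pu pv uv nv0.
  have e0 : u a0 <-> v a0 by split=> // /uv.
  by rewrite /= /F3_map (propext e0) (propext e1) (propext e2) eqxx.
- move=> u j pu /orP[/eqP <-|/eqP j0].
    by exists u; split=> //; split=> // c.
  have [v [pv uv v0]] := up_to_a0 pu.
  by exists v; do 2!split=> //; apply: ord_inj; rewrite j0 F3_class0.
- move=> u j pu /orP[/eqP ->|/eqP /F3_class_eq0 /(a0_above_x pu) xu].
    by exists u; split=> //; split=> // c.
  have [y [py yx <-]] := below_x j.
  by exists y; split=> //; split=> // c /yx /xu.
- by move=> j; have [y [py _ <-]] := below_x j; exists y.
- exact: F3_map_open.
Qed.

End F3Map.

Section ImmediatePredecessors.
Variables (d : Order.disp_t) (L : tbDistrLatticeType d).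
Implicit Types p q x : L -> Prop.

Lemma imm_pred_le_eq p q x :
  imm_pred p x -> imm_pred q x -> pf_le p q -> pf_eq p q.
Proof.
move=> [_ [_ [_ no_between]]] [pq [_ [qx _]]] pq_le; split=> //.
by apply: contrapT => nqp; apply: no_between; exists q; split=> //; split.
Qed.

Lemma imm_pred_sep p q x : imm_pred p x -> imm_pred q x -> ~ pf_eq p q ->
  exists a, p a /\ ~ q a.
Proof. by move=> ip iq npq; apply: pf_not_le => /(imm_pred_le_eq ip iq). Qed.

End ImmediatePredecessors.

Section RootedCoTree.
Variables (d : Order.disp_t) (L : tbDistrLatticeType d) (B : biHeyting L).
Hypothesis HLC : valid_biLC B.
Variable m : L -> Prop.
Hypotheses (pm : prime_filter m)
  (above_m_or_minimal : forall u, prime_filter u -> pf_lt m u \/ pf_minimal u)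
  (minimal_bounded_with_m : forall y, pf_minimal y ->
     exists z, [/\ prime_filter z, pf_le y z & pf_le m z]).

Lemma pf_le_imm_pred z x u : pf_le m z -> imm_pred z x ->
  prime_filter u -> pf_le m u -> ~ pf_le x u -> pf_le u z.
Proof.
move=> mz [pz [px [[zx _] no_between]]] pu mu nxu.
have mx : pf_le m x by move=> a /mz /zx.
have [//|ux] := biLC_pf_le_total HLC pm px pu mx mu.
have [zu|//] := biLC_pf_le_total HLC pm pz pu mz mu.
by apply: contrapT => nuz; apply: no_between; exists u.
Qed.

Lemma upset_imm_pred_clopen z x : pf_le m z -> imm_pred z x ->
  exists a, forall u, prime_filter u -> pf_le x u <-> u a.
Proof.
move=> mz iz; have [pz [px [[zx nxz] _]]] := iz.
have [e [xe nze]] := pf_not_le nxz.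
exists (e `&` bcoimp B \top e) => u pu; split=> [xu|].
  apply/(pf_meetP pu); split; first exact: xu.
  apply/xu/zx/mz/(pf_bcoimp_top B e pm).
  by exists m; split=> // /mz.
move=> /(pf_meetP pu)[ue /(pf_bcoimp_top B _ pu)[v [pv vu nve]]].
have [[mu _]|[_ umin]] := above_m_or_minimal pu.
  by apply: contrapT => nxu; apply/nze/(pf_le_imm_pred mz iz pu mu nxu).
by case: nve; apply: umin v pv vu e ue.
Qed.

Lemma below_upset x u : prime_filter x -> pf_le m x -> prime_filter u ->
  exists v, [/\ prime_filter v, pf_le u v & pf_le x v].
Proof.
move=> px mx pu.
have [s [ps us ms]] : exists s, [/\ prime_filter s, pf_le u s & pf_le m s].
  have [[mu _]|umin] := above_m_or_minimal pu; first by exists u; split.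
  exact: minimal_bounded_with_m.
have [sx|xs] := biLC_pf_le_total HLC pm ps px ms mx.
  by exists x; split=> // a /us /sx.
by exists s.
Qed.

Lemma bi_pmorphic_onto_F3_of_imm_preds x z y1 y2 :
  pf_le m z -> imm_pred z x -> imm_pred y1 x -> imm_pred y2 x ->
  ~ pf_eq y1 y2 -> ~ pf_eq y1 z -> ~ pf_eq y2 z -> bi_pmorphic_onto L F3.
Proof.
move=> mz iz i1 i2 n12 n1z n2z.
have [pz [px [[zx _] _]]] := iz.
have [p1 [_ [[y1x _] _]]] := i1.
have [p2 [_ [[y2x _] _]]] := i2.
have mx : pf_le m x by move=> a /mz /zx.
have [a0 x_a0] := upset_imm_pred_clopen mz iz.
have notin_a0 y : imm_pred y x -> ~ y a0.
  by move=> [py [_ [[_ nxy] _]]] /(x_a0 y py).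
have [p [y1p ny2p]] := imm_pred_sep i1 i2 n12.
have [q [y1q nzq]] := imm_pred_sep i1 iz n1z.
have [c [y2c nzc]] := imm_pred_sep i2 iz n2z.
have nzpq : ~ z (p `&` q) by move/(pf_meetP pz) => [_].
apply: (@bi_pmorphic_onto_F3 _ _ a0 (p `&` q) c x).
- by move=> u pu /(x_a0 u pu).
- case=> [[|[|[|[|k]]]] lt_k4] //.
  + by exists x; split=> //; apply/ord_inj/F3_class0/(x_a0 x px).
  + exists y1; split=> //; apply/ord_inj/F3_class1; first exact: notin_a0.
    exact/(pf_meetP p1).
  + exists y2; split=> //; apply/ord_inj/F3_class2; first exact: notin_a0.
      by move/(pf_meetP p2) => [].
    exact: y2c.
  + by exists z; split=> //; apply/ord_inj/F3_class3; first exact: notin_a0.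
- move=> u pu; have [v [pv uv xv]] := below_upset px mx pu.
  by exists v; split=> //; apply/(x_a0 v pv).
- move=> u v pu pv uv nva0.
  have [[mv _]|[_ vmin]] := above_m_or_minimal pv.
    have vz := pf_le_imm_pred mz iz pv mv (contra_not (x_a0 v pv).1 nva0).
    have off_z b : ~ z b -> u b <-> v b.
      by move=> nzb; split=> [/uv|] /vz.
    by split; apply: off_z.
  by have vu := vmin u pu uv; split; split=> [/uv|/vu].
Qed.

End RootedCoTree.

Theorem lemma3p28 (d : Order.disp_t) (L : tbDistrLatticeType d)
  (B : biHeyting L) (n : nat) :
  (0 < n)%N ->
  infinite_alg L ->
  n_generated B n ->
  subdirectly_irreducible B ->
  validates_LFC B ->
  forall m : L -> Prop,
  pf_minimal m ->
  (forall x, prime_filter x -> pf_lt m x \/ pf_minimal x) ->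
  (forall y, pf_minimal y -> ~ pf_eq y m ->
     exists z, imm_pred y z /\ pf_lt m z /\
       forall z', imm_pred y z' -> pf_eq z' z) ->
  forall x, prime_filter x -> pf_lt m x -> ~ up_limit m x ->
  forall z1 z2 z3, imm_pred z1 x -> imm_pred z2 x -> imm_pred z3 x ->
    pf_eq z1 z2 \/ pf_eq z1 z3 \/ pf_eq z2 z3.
Proof.
move=> _ _ _ _ [HLC _ _ _ notF3] m [pm _] above_m_or_minimal succ_min.
move=> x _ _ /contrapT[z [iz mz]] z1 z2 z3 i1 i2 i3.
have minimal_bounded_with_m y : pf_minimal y ->
    exists z, [/\ prime_filter z, pf_le y z & pf_le m z].
  move=> ymin; have [[ym _]|nym] := pselect (pf_eq y m).
    by exists m; split.
  have [s [[_ [ps [[ys _] _]]] [[ms _] _]]] := succ_min y ymin nym.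
  by exists s.
have same_side u v : imm_pred u x -> imm_pred v x ->
    (pf_eq u z <-> pf_eq v z) -> pf_eq u v.
  move=> iu iv uv; have [[uz zu]|nuz] := pselect (pf_eq u z).
    have [vz zv] := uv.1 (conj uz zu).
    by split=> a; [move/uz/zv | move/vz/zu].
  apply: contrapT => nuv; apply: notF3.
  exact: (bi_pmorphic_onto_F3_of_imm_preds HLC pm above_m_or_minimal
    minimal_bounded_with_m mz iz iu iv nuv nuz (contra_not uv.2 nuz)).
have [e1|e1] := pselect (pf_eq z1 z); have [e2|e2] := pselect (pf_eq z2 z);
  have [e3|e3] := pselect (pf_eq z3 z);
  first [ by left; apply: same_side
        | by right; left; apply: same_side
        | by right; right; apply: same_side ].
Qed.
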